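(* Let $\mathcal{H}=(H,(G_h)_{h\in H})$ be a point-finite, honest graph-decomposition of a graph $G$ into finite connected parts. Then the map $f\mapsto g_f$ from the directions of $G$ to the directions of $H$ is a bijection.
   Context: A graph-decomposition of $G$ is a pair $(H,(G_h)_{h\in H})$ of a graph $H$ and subgraphs $G_h\subseteq G$ such that $G=\bigcup_h G_h$ and, for every vertex $v$ of $G$, $H_v:=H[\{h:v\in G_h\}]$ is connected. It is point-finite if every $H_v$ is finite, and honest if $G_h\cap G_{h'}\ne\emptyset$ for every edge $hh'$ of $H$. A direction of a graph $X$ is a map $f$ assigning to every finite vertex set $Y$ of $X$ a component $f(Y)$ of $X-Y$ such that $f(Y)\supseteq f(Y')$ whenever $Y\subseteq Y'$. For a direction $f$ of $G$, $g_f$ is the direction of $H$ defined as follows: for a finite $Y\subseteq V(H)$ let $X_Y=\bigcup_{h\in Y}V(G_h)$ (finite since parts are finite); then $g_f(Y)$ is the component of $H-Y$ containing $\bigcup_{v\in f(X_Y)}H_v$. *)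

From Stdlib Require Import List Relations.

Definition finite_set {T : Type} (A : T -> Prop) : Prop :=
  exists l : list T, forall x, A x -> In x l.

Definition simple_graph {T : Type} (adj : T -> T -> Prop) : Prop :=
  (forall x y, adj x y -> adj y x) /\ (forall x, ~ adj x x).

Definition conn_in {T : Type} (R : T -> T -> Prop) (S : T -> Prop) (x y : T) : Prop :=
  S x /\ clos_refl_trans T (fun a b => S a /\ S b /\ R a b) x y.

Definition is_component {T : Type} (adj : T -> T -> Prop) (Y C : T -> Prop) : Prop :=
  exists x, ~ Y x /\ forall y, C y <-> conn_in adj (fun z => ~ Y z) x y.

Definition direction {T : Type} (adj : T -> T -> Prop) (f : (T -> Prop) -> (T -> Prop)) : Prop :=
  (forall Y, finite_set Y -> is_component adj Y (f Y)) /\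
  (forall Y Y', finite_set Y -> finite_set Y' -> (forall x, Y x -> Y' x) ->
     forall x, f Y' x -> f Y x).

(* Directions are functions on finite sets: equal iff they agree on all finite sets. *)
Definition dir_equiv {T : Type} (f g : (T -> Prop) -> (T -> Prop)) : Prop :=
  forall Y, finite_set Y -> forall x, f Y x <-> g Y x.

(* Graph-decomposition (H, (G_h)_h) of G: G_h has vertex set VG h and edge set EG h. *)
Definition graph_decomposition {V I : Type} (adj : V -> V -> Prop) (adjH : I -> I -> Prop)
    (VG : I -> V -> Prop) (EG : I -> V -> V -> Prop) : Prop :=
  (forall h u v, EG h u v -> adj u v /\ VG h u /\ VG h v) /\
  (forall h u v, EG h u v -> EG h v u) /\
  (forall v, exists h, VG h v) /\
  (forall u v, adj u v -> exists h, EG h u v) /\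
  (forall v h h', VG h v -> VG h' v -> conn_in adjH (fun k => VG k v) h h').

Definition point_finite {V I : Type} (VG : I -> V -> Prop) : Prop :=
  forall v, finite_set (fun h => VG h v).

Definition honest {V I : Type} (adjH : I -> I -> Prop) (VG : I -> V -> Prop) : Prop :=
  forall h h', adjH h h' -> exists v, VG h v /\ VG h' v.

Definition finite_part {V I : Type} (VG : I -> V -> Prop) (h : I) : Prop :=
  finite_set (VG h).

Definition connected_part {V I : Type} (VG : I -> V -> Prop) (EG : I -> V -> V -> Prop) (h : I) : Prop :=
  (exists v, VG h v) /\ forall u v, VG h u -> VG h v -> conn_in (EG h) (VG h) u v.

Definition X_of {V I : Type} (VG : I -> V -> Prop) (Y : I -> Prop) : V -> Prop :=
  fun v => exists h, Y h /\ VG h v.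

Definition g_of {V I : Type} (adjH : I -> I -> Prop) (VG : I -> V -> Prop)
    (f : (V -> Prop) -> (V -> Prop)) : (I -> Prop) -> (I -> Prop) :=
  fun Y h => exists C, is_component adjH Y C /\
    (forall v, f (X_of VG Y) v -> forall h', VG h' v -> C h') /\ C h.

(* Read as the relation "v ∈ G_h", the decomposition is symmetric: the parts
   G_h decompose G over H, and the sets H_v = {h | v ∈ G_h} decompose H over G,
   the roles of finiteness of the G_h, connectedness of the H_v and covering of
   the edges of G being taken over by point-finiteness, connectedness of the G_h
   and honesty.  For such a decomposition, a walk in G avoiding X_Y is shadowed
   in H by a walk avoiding Y, since consecutive vertices share a part and each
   H_v is connected and misses Y; so the parts meeting f(X_Y) lie in a single
   component g_f(Y) of H - Y, and g_f is a direction.  The same construction on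
   the transposed decomposition sends directions of H to directions of G, and
   the two are mutually inverse: if X is finite and Y is the set of parts
   meeting X, then X ⊆ X_Y, so a vertex of f(X_Y) lies both in f(X) and in the
   component of G - X read off from g_f(Y). *)
From Stdlib Require Import List Relations.

Section Walks.

Variables (T : Type) (R : T -> T -> Prop).

Lemma conn_in_refl (S : T -> Prop) x : S x -> conn_in R S x x.
Proof. split; [assumption | apply rt_refl]. Qed.

Lemma conn_in_trans (S : T -> Prop) x y z :
  conn_in R S x y -> conn_in R S y z -> conn_in R S x z.
Proof. intros [Sx Hxy] [_ Hyz]; split; [assumption | eapply rt_trans; eauto]. Qed.

Lemma conn_in_mem_r (S : T -> Prop) x y : conn_in R S x y -> S y.
Proof.
  intros [Sx Hxy]. apply clos_rt_rt1n_iff in Hxy.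
  induction Hxy as [| x y z [_ [Sy _]] _ IH]; auto.
Qed.

Lemma conn_in_sym (S : T -> Prop) x y :
  (forall a b, R a b -> R b a) -> conn_in R S x y -> conn_in R S y x.
Proof.
  intros R_sym Hxy. split; [eapply conn_in_mem_r; eauto |].
  destruct Hxy as [_ Hxy]. apply clos_rt_rtn1_iff in Hxy.
  induction Hxy as [| y z [Sy [Sz Ryz]] _ IH]; [apply rt_refl |].
  apply rt_trans with y; [apply rt_step; split; [| split]; eauto | exact IH].
Qed.

Lemma conn_in_mono (R' : T -> T -> Prop) (S S' : T -> Prop) x y :
  (forall a, S a -> S' a) -> (forall a b, S a -> S b -> R a b -> R' a b) ->
  conn_in R S x y -> conn_in R' S' x y.
Proof.
  intros SS' RR' [Sx Hxy]. split; [auto |]. clear Sx.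
  induction Hxy as [a b [Sa [Sb Rab]] | | ].
  - apply rt_step. auto.
  - apply rt_refl.
  - eapply rt_trans; eauto.
Qed.

End Walks.

Lemma conn_in_transport {A B : Type} (RA : A -> A -> Prop) (SA : A -> Prop)
    (RB : B -> B -> Prop) (SB : B -> Prop) (M : A -> B -> Prop) :
  (forall a, SA a -> exists b, M a b) ->
  (forall a b b', SA a -> M a b -> M a b' -> conn_in RB SB b b') ->
  (forall a a', SA a -> SA a' -> RA a a' -> exists b, M a b /\ M a' b) ->
  forall a a' b b', conn_in RA SA a a' -> M a b -> M a' b' -> conn_in RB SB b b'.
Proof.
  intros M_total M_conn M_edge a a' b b' [Sa Haa'].
  apply clos_rt_rt1n_iff in Haa'. revert b b' Sa.
  induction Haa' as [a | a a1 a' [_ [Sa1 Raa1]] _ IH]; intros b b' Sa Mb Mb'; [eauto |].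
  destruct (M_edge a a1 Sa Sa1 Raa1) as [c [Mac Ma1c]].
  apply conn_in_trans with c; [eapply M_conn | apply IH]; eauto.
Qed.

Section Components.

Variables (T : Type) (R : T -> T -> Prop) (Y : T -> Prop).

Lemma component_conn_in x : ~ Y x -> is_component R Y (conn_in R (fun z => ~ Y z) x).
Proof. intro nYx. exists x. split; [assumption | tauto]. Qed.

Lemma component_nonempty C : is_component R Y C -> exists x, C x.
Proof. intros [w [nYw HC]]. exists w. apply HC, conn_in_refl, nYw. Qed.

Lemma component_not_in C x : is_component R Y C -> C x -> ~ Y x.
Proof. intros [w [_ HC]] Cx. apply HC in Cx. exact (conn_in_mem_r _ _ _ _ _ Cx). Qed.

Lemma component_iff_conn_in C x :
  (forall a b, R a b -> R b a) -> is_component R Y C -> C x ->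
  forall y, C y <-> conn_in R (fun z => ~ Y z) x y.
Proof.
  intros R_sym [w [_ HC]] Cx y. apply HC in Cx. rewrite HC. split; intro H.
  - eapply conn_in_trans; [apply conn_in_sym |]; eauto.
  - eapply conn_in_trans; eauto.
Qed.

End Components.

Lemma finite_set_bigcup {A B : Type} (F : A -> B -> Prop) (Y : A -> Prop) :
  (forall a, finite_set (F a)) -> finite_set Y ->
  finite_set (fun b => exists a, Y a /\ F a b).
Proof.
  intros F_fin [l Hl].
  assert (Hlist : exists L, forall b, (exists a, In a l /\ F a b) -> In b L).
  { clear Hl. induction l as [| a l [L HL]].
    - exists nil. intros b [a [[] _]].
    - destruct (F_fin a) as [La HLa]. exists (La ++ L).
      intros b [a' [[<- | Hin] Fb]]; apply in_or_app; eauto. }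
  destruct Hlist as [L HL]. exists L. intros b [a [Ya Fb]]. eauto.
Qed.

(* [M a b] says that the vertex [a] lies in the part indexed by [b]: the parts
   [{a | M a b}] form a graph-decomposition of [(A, RA)] over [(B, RB)] into
   finite (not necessarily connected) parts. *)
Record finite_decomposition {A B : Type} (RA : A -> A -> Prop) (RB : B -> B -> Prop)
    (M : A -> B -> Prop) : Prop := {
  decomposition_total : forall a, exists b, M a b;
  decomposition_conn : forall a b b', M a b -> M a b' -> conn_in RB (M a) b b';
  decomposition_edge : forall a a', RA a a' -> exists b, M a b /\ M a' b;
  decomposition_finite : forall b, finite_set (fun a => M a b) }.

Definition preimage {A B : Type} (M : A -> B -> Prop) (Y : B -> Prop) : A -> Prop :=
  fun a => exists b, Y b /\ M a b.

(* [g_of adjH VG] is [induced adjH (fun v h => VG h v)] up to conversion. *)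
Definition induced {A B : Type} (RB : B -> B -> Prop) (M : A -> B -> Prop)
    (f : (A -> Prop) -> (A -> Prop)) : (B -> Prop) -> (B -> Prop) :=
  fun Y b => exists C, is_component RB Y C /\
    (forall a, f (preimage M Y) a -> forall b', M a b' -> C b') /\ C b.

Lemma preimage_finite {A B : Type} (M : A -> B -> Prop) (Y : B -> Prop) :
  (forall b, finite_set (fun a => M a b)) -> finite_set Y -> finite_set (preimage M Y).
Proof. intros M_fin. exact (finite_set_bigcup (fun b a => M a b) Y M_fin). Qed.

Section InducedDirection.

Variables (A B : Type) (RA : A -> A -> Prop) (RB : B -> B -> Prop) (M : A -> B -> Prop).
Hypothesis RB_sym : forall b b', RB b b' -> RB b' b.
Hypothesis hM : finite_decomposition RA RB M.
Variable f : (A -> Prop) -> (A -> Prop).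
Hypothesis hf : direction RA f.

Lemma direction_preimage_component Y :
  finite_set Y -> is_component RA (preimage M Y) (f (preimage M Y)).
Proof. intro hY. apply hf, preimage_finite; [apply hM | exact hY]. Qed.

Lemma direction_image_not_in Y a b :
  finite_set Y -> f (preimage M Y) a -> M a b -> ~ Y b.
Proof.
  intros hY fa Mab Yb. eapply component_not_in; [apply direction_preimage_component; eauto | eauto |].
  exists b. auto.
Qed.

Lemma direction_image_conn Y a a' b b' :
  finite_set Y -> f (preimage M Y) a -> f (preimage M Y) a' -> M a b -> M a' b' ->
  conn_in RB (fun z => ~ Y z) b b'.
Proof.
  intros hY fa fa' Mab Ma'b'.
  destruct (direction_preimage_component Y hY) as [w [_ Hw]].
  apply Hw in fa, fa'.
  destruct (decomposition_total _ _ _ hM w) as [c Mwc].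
  assert (shadow : forall x y, conn_in RA (fun z => ~ preimage M Y z) w x -> M x y ->
                     conn_in RB (fun z => ~ Y z) c y).
  { intros x y Hwx Mxy.
    apply (conn_in_transport RA (fun z => ~ preimage M Y z) RB (fun z => ~ Y z) M) with w x;
      auto.
    - intros; apply hM.
    - intros d e e' nYd Mde Mde'. apply (conn_in_mono B RB RB (M d)); [| tauto |].
      + intros k Mdk Yk. apply nYd. exists k. auto.
      + apply hM; assumption.
    - intros d d' _ _. apply hM. }
  apply conn_in_trans with c; [apply conn_in_sym |]; eauto.
Qed.

Lemma induced_iff Y a b :
  finite_set Y -> f (preimage M Y) a -> M a b ->
  forall b', induced RB M f Y b' <-> conn_in RB (fun z => ~ Y z) b b'.
Proof.
  intros hY fa Mab b'. split.
  - intros [C [HC [HCf Cb']]].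
    rewrite <- (component_iff_conn_in B RB Y C b RB_sym HC (HCf a fa b Mab)). exact Cb'.
  - intro Hbb'. exists (conn_in RB (fun z => ~ Y z) b). split; [| split].
    + apply component_conn_in. eapply direction_image_not_in; eauto.
    + intros a' fa' d Ma'd. exact (direction_image_conn Y a a' b d hY fa fa' Mab Ma'd).
    + exact Hbb'.
Qed.

Lemma induced_at Y a b : finite_set Y -> f (preimage M Y) a -> M a b -> induced RB M f Y b.
Proof.
  intros hY fa Mab. apply (induced_iff Y a b); auto.
  apply conn_in_refl. eapply direction_image_not_in; eauto.
Qed.

Lemma induced_direction : direction RB (induced RB M f).
Proof.
  split.
  - intros Y hY.
    destruct (component_nonempty _ _ _ _ (direction_preimage_component Y hY)) as [a fa].
    destruct (decomposition_total _ _ _ hM a) as [b Mab].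
    exists b. split; [eapply direction_image_not_in; eauto |].
    intro b'. apply (induced_iff Y a b); auto.
  - intros Y Y' hY hY' YY' b' Hb'.
    destruct (component_nonempty _ _ _ _ (direction_preimage_component Y' hY')) as [a fa].
    destruct (decomposition_total _ _ _ hM a) as [b Mab].
    assert (fa_Y : f (preimage M Y) a).
    { apply (proj2 hf) with (Y' := preimage M Y'); [| | | exact fa].
      - apply preimage_finite; [apply hM | exact hY].
      - apply preimage_finite; [apply hM | exact hY'].
      - intros c [d [Yd Mcd]]. exists d. auto. }
    apply (induced_iff Y a b); auto.
    apply (conn_in_mono B RB RB (fun z => ~ Y' z)); auto.
    apply (induced_iff Y' a b); auto.
Qed.

End InducedDirection.

Lemma induced_equiv {A B : Type} (RB : B -> B -> Prop) (M : A -> B -> Prop)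
    (f f' : (A -> Prop) -> (A -> Prop)) :
  (forall b, finite_set (fun a => M a b)) ->
  dir_equiv f f' -> dir_equiv (induced RB M f) (induced RB M f').
Proof.
  intros M_fin ff' Y hY b.
  pose proof (ff' _ (preimage_finite M Y M_fin hY)) as HY.
  split; intros [C [HC [HCf Cb]]]; exists C; split; [| split | | split]; auto;
    intros a Ha; apply HCf, HY, Ha.
Qed.

Lemma induced_transpose_induced {A B : Type} (RA : A -> A -> Prop) (RB : B -> B -> Prop)
    (M : A -> B -> Prop) (f : (A -> Prop) -> (A -> Prop)) :
  (forall a a', RA a a' -> RA a' a) -> (forall b b', RB b b' -> RB b' b) ->
  finite_decomposition RA RB M -> finite_decomposition RB RA (fun b a => M a b) ->
  direction RA f -> dir_equiv (induced RA (fun b a => M a b) (induced RB M f)) f.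
Proof.
  intros RA_sym RB_sym hM hMt hf X hX a.
  set (Y := preimage (fun b a => M a b) X).
  assert (hY : finite_set Y) by (apply preimage_finite; [apply hMt | exact hX]).
  assert (XY : forall x, X x -> preimage M Y x).
  { intros x Xx. destruct (decomposition_total _ _ _ hM x) as [b Mxb].
    exists b. split; [exists x |]; auto. }
  destruct (component_nonempty _ _ _ _ (direction_preimage_component A B RA RB M hM f hf Y hY))
    as [a0 fa0].
  destruct (decomposition_total _ _ _ hM a0) as [b0 Ma0b0].
  assert (fX_a0 : f X a0).
  { apply (proj2 hf) with (Y' := preimage M Y); auto.
    apply preimage_finite; [apply hM | exact hY]. }
  rewrite (component_iff_conn_in A RA X (f X) a0 RA_sym (proj1 hf X hX) fX_a0 a).
  apply (induced_iff B A RB RA (fun b a => M a b) RA_sym hMt (induced RB M f)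
           (induced_direction A B RA RB M RB_sym hM f hf) X b0 a0 hX); auto.
  apply (induced_at A B RA RB M RB_sym hM f hf Y a0 b0 hY fa0 Ma0b0).
Qed.

Lemma decomposition_parts {V I : Type} (adj : V -> V -> Prop) (adjH : I -> I -> Prop)
    (VG : I -> V -> Prop) (EG : I -> V -> V -> Prop) :
  graph_decomposition adj adjH VG EG -> (forall h, finite_part VG h) ->
  finite_decomposition adj adjH (fun v h => VG h v).
Proof.
  intros [EG_sub [_ [VG_cover [EG_cover H_conn]]]] hfin. split; auto.
  intros u v Huv. destruct (EG_cover u v Huv) as [h Eh].
  exists h. split; apply EG_sub in Eh; tauto.
Qed.

Lemma decomposition_transpose {V I : Type} (adj : V -> V -> Prop) (adjH : I -> I -> Prop)
    (VG : I -> V -> Prop) (EG : I -> V -> V -> Prop) :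
  graph_decomposition adj adjH VG EG -> point_finite VG -> honest adjH VG ->
  (forall h, connected_part VG EG h) -> finite_decomposition adjH adj VG.
Proof.
  intros [EG_sub _] hpf hhon hconn. split; auto.
  - intro h. apply hconn.
  - intros h u v Vu Vv. apply (conn_in_mono V (EG h) adj (VG h)); auto.
    + intros x y _ _ Exy. apply (EG_sub h x y Exy).
    + apply hconn; assumption.
Qed.

Theorem lemma3p5 (V I : Type) (adj : V -> V -> Prop) (adjH : I -> I -> Prop)
    (VG : I -> V -> Prop) (EG : I -> V -> V -> Prop)
    (hG : simple_graph adj) (hH : simple_graph adjH)
    (hD : graph_decomposition adj adjH VG EG)
    (hpf : point_finite VG) (hhon : honest adjH VG)
    (hfin : forall h, finite_part VG h) (hconn : forall h, connected_part VG EG h) :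
  (forall f, direction adj f -> direction adjH (g_of adjH VG f)) /\
  (forall f f', direction adj f -> direction adj f' ->
     dir_equiv (g_of adjH VG f) (g_of adjH VG f') -> dir_equiv f f') /\
  (forall g, direction adjH g ->
     exists f, direction adj f /\ dir_equiv (g_of adjH VG f) g).
Proof.
  pose proof (decomposition_parts adj adjH VG EG hD hfin) as hM.
  pose proof (decomposition_transpose adj adjH VG EG hD hpf hhon hconn) as hMt.
  destruct hG as [adj_sym _], hH as [adjH_sym _].
  split; [| split].
  - intros f hf. exact (induced_direction V I adj adjH _ adjH_sym hM f hf).
  - intros f f' hf hf' hgg' X hX v.
    rewrite <- (induced_transpose_induced adj adjH _ f adj_sym adjH_sym hM hMt hf X hX v),
            <- (induced_transpose_induced adj adjH _ f' adj_sym adjH_sym hM hMt hf' X hX v).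
    apply (induced_equiv adj VG _ _ (decomposition_finite _ _ _ hMt) hgg' X hX v).
  - intros g hg. exists (induced adj VG g). split.
    + exact (induced_direction I V adjH adj VG adj_sym hMt g hg).
    + exact (induced_transpose_induced adjH adj VG g adjH_sym adj_sym hMt hM hg).
Qed.
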